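(* Let $\mathcal B$ be an extriangulated category with enough projectives and enough injectives, and let $(\mathcal C,\mathcal C^{\perp_1})$ be a cotorsion pair with $\mathcal C$ rigid, with heart $\mathcal H/\mathcal C$. Let $g:A\twoheadrightarrow B$ be a deflation with $A,B\in\mathcal H$ such that $\overline g$ is an epimorphism in $\mathcal H/\mathcal C$. Then for every $X\in\Omega\mathcal C$ the map $\operatorname{Hom}_{\mathcal B}(X,g):\operatorname{Hom}_{\mathcal B}(X,A)\to\operatorname{Hom}_{\mathcal B}(X,B)$ is surjective.
   Context: $(\mathcal B,\mathbb E,\mathfrak s)$ is an extriangulated category (Nakaoka–Palu); conflations $A\rightarrowtail B\twoheadrightarrow C$. Subcategories are full, additive, closed under isomorphisms and finite direct sums. $\mathcal P$ = projectives; $\mathcal C^{\perp_1}=\{B\mid\mathbb E(\mathcal C,B)=0\}$; $\mathcal C$ rigid means $\mathbb E(\mathcal C,\mathcal C)=0$. $\Omega\mathcal C$ is the class of objects $U$ admitting a conflation $U\rightarrowtail P\twoheadrightarrow C$ with $P\in\mathcal P$, $C\in\mathcal C$. For a cotorsion pair $(\mathcal U,\mathcal V)$ (summand-closed, $\mathbb E(\mathcal U,\mathcal V)=0$, every $B$ admits conflations $V_B\rightarrowtail U_B\twoheadrightarrow B$, $B\rightarrowtail V^B\twoheadrightarrow U^B$ with $U$'s in $\mathcal U$, $V$'s in $\mathcal V$), $\mathcal H$ is the subcategory of objects admitting such conflations with $U_B,V^B\in\mathcal U\cap\mathcal V$, and the heart is the ideal quotient $\mathcal H/(\mathcal U\cap\mathcal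 V)$, which is abelian; here $\mathcal U\cap\mathcal V=\mathcal C$. $\overline g$ is the image of $g$ in the heart. *)

From HB Require Import structures.
From mathcomp Require Import all_boot all_algebra.
Set Implicit Arguments. Unset Strict Implicit. Unset Printing Implicit Defensive.
Import GRing.Theory.
Local Open Scope ring_scope.

Record Cat := {
  Obj :> Type;
  Mor : Obj -> Obj -> zmodType;
  idm : forall A : Obj, Mor A A;
  mcomp : forall A B C : Obj, Mor B C -> Mor A B -> Mor A C
}.
Arguments Mor {c} : rename.
Arguments idm {c} A : rename.
Arguments mcomp {c A B C} : rename.
Notation "g ∘ f" := (mcomp g f) (at level 40, left associativity).

Definition is_iso (B : Cat) (X Y : B) (f : Mor X Y) : Prop :=
  exists g : Mor Y X, g ∘ f = idm X /\ f ∘ g = idm Y.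

Definition is_biprod (B : Cat) (A1 A2 S : B)
  (i1 : Mor A1 S) (i2 : Mor A2 S) (p1 : Mor S A1) (p2 : Mor S A2) : Prop :=
  [/\ p1 ∘ i1 = idm A1, p2 ∘ i2 = idm A2, p2 ∘ i1 = 0, p1 ∘ i2 = 0
    & i1 ∘ p1 + i2 ∘ p2 = idm S].

Record additive (B : Cat) : Prop := {
  comp_assoc : forall (A1 A2 A3 A4 : B) (h : Mor A3 A4) (g : Mor A2 A3)
      (f : Mor A1 A2), h ∘ (g ∘ f) = (h ∘ g) ∘ f;
  comp_idl : forall (A1 A2 : B) (f : Mor A1 A2), idm A2 ∘ f = f;
  comp_idr : forall (A1 A2 : B) (f : Mor A1 A2), f ∘ idm A1 = f;
  comp_addl : forall (A1 A2 A3 : B) (g g' : Mor A2 A3) (f : Mor A1 A2),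
      (g + g') ∘ f = g ∘ f + g' ∘ f;
  comp_addr : forall (A1 A2 A3 : B) (g : Mor A2 A3) (f f' : Mor A1 A2),
      g ∘ (f + f') = g ∘ f + g ∘ f';
  zero_object : exists Z : B, idm Z = 0;
  biprod_exists : forall A1 A2 : B, exists (S : B) (i1 : Mor A1 S)
      (i2 : Mor A2 S) (p1 : Mor S A1) (p2 : Mor S A2), is_biprod i1 i2 p1 p2
}.

(* E C A = E(C,A);  push a = a_* ;  pull c = c^* ;                         *)
(* realizes d x y  <->  s(d) = [A --x--> M --y--> C]                           *)
Record ExtriData (B : Cat) := {
  Ex : B -> B -> zmodType;
  push : forall (C A A' : B), Mor A A' -> Ex C A -> Ex C A';
  pull : forall (C' C A : B), Mor C' C -> Ex C A -> Ex C' A;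
  realizes : forall (C A : B), Ex C A -> forall M : B, Mor A M -> Mor M C -> Prop
}.
Arguments Ex {B} e : rename.
Arguments push {B} e {C A A'} : rename.
Arguments pull {B} e {C' C A} : rename.
Arguments realizes {B} e {C A} d {M} : rename.

Record extriangulated (B : Cat) (e : ExtriData B) : Prop := {
  ext_additive : additive B;
  (* (ET1)+(ET2): E is a biadditive functor B^op x B -> Ab *)
  push_addE : forall (C A A' : B) (a : Mor A A') (d d' : Ex e C A),
      push e a (d + d') = push e a d + push e a d';
  push_addM : forall (C A A' : B) (a a' : Mor A A') (d : Ex e C A),
      push e (a + a') d = push e a d + push e a' d;
  push_id : forall (C A : B) (d : Ex e C A), push e (idm A) d = d;
  push_comp : forall (C A A' A'' : B) (a : Mor A A') (a' : Mor A' A'')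
      (d : Ex e C A), push e (a' ∘ a) d = push e a' (push e a d);
  pull_addE : forall (C' C A : B) (c : Mor C' C) (d d' : Ex e C A),
      pull e c (d + d') = pull e c d + pull e c d';
  pull_addM : forall (C' C A : B) (c c' : Mor C' C) (d : Ex e C A),
      pull e (c + c') d = pull e c d + pull e c' d;
  pull_id : forall (C A : B) (d : Ex e C A), pull e (idm C) d = d;
  pull_comp : forall (C'' C' C A : B) (c : Mor C' C) (c' : Mor C'' C')
      (d : Ex e C A), pull e (c ∘ c') d = pull e c' (pull e c d);
  push_pull : forall (C' C A A' : B) (a : Mor A A') (c : Mor C' C)
      (d : Ex e C A), push e a (pull e c d) = pull e c (push e a d);
  (* s(d) is an equivalence class of sequences A -> M -> C *)
  real_exists : forall (C A : B) (d : Ex e C A),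
      exists (M : B) (x : Mor A M) (y : Mor M C), realizes e d x y;
  real_unique : forall (C A M M' : B) (d : Ex e C A) (x : Mor A M)
      (y : Mor M C) (x' : Mor A M') (y' : Mor M' C),
      realizes e d x y -> realizes e d x' y' ->
      exists b : Mor M M', [/\ is_iso b, b ∘ x = x' & y' ∘ b = y];
  real_iso : forall (C A M M' : B) (d : Ex e C A) (x : Mor A M)
      (y : Mor M C) (b : Mor M M') (y' : Mor M' C),
      realizes e d x y -> is_iso b -> y' ∘ b = y -> realizes e d (b ∘ x) y';
  real_morph : forall (C A M C' A' M' : B) (d : Ex e C A) (d' : Ex e C' A')
      (x : Mor A M) (y : Mor M C) (x' : Mor A' M') (y' : Mor M' C')
      (a : Mor A A') (c : Mor C C'),
      realizes e d x y -> realizes e d' x' y' -> push e a d = pull e c d' ->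
      exists b : Mor M M', b ∘ x = x' ∘ a /\ y' ∘ b = c ∘ y;
  real_zero : forall (A C S : B) (i1 : Mor A S) (i2 : Mor C S)
      (p1 : Mor S A) (p2 : Mor S C),
      is_biprod i1 i2 p1 p2 -> realizes e (0 : Ex e C A) i1 p2;
  real_sum : forall (C A M C' A' M' SA SM SC : B)
      (d : Ex e C A) (d' : Ex e C' A')
      (x : Mor A M) (y : Mor M C) (x' : Mor A' M') (y' : Mor M' C')
      (iA1 : Mor A SA) (iA2 : Mor A' SA) (pA1 : Mor SA A) (pA2 : Mor SA A')
      (iM1 : Mor M SM) (iM2 : Mor M' SM) (pM1 : Mor SM M) (pM2 : Mor SM M')
      (iC1 : Mor C SC) (iC2 : Mor C' SC) (pC1 : Mor SC C) (pC2 : Mor SC C'),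
      is_biprod iA1 iA2 pA1 pA2 -> is_biprod iM1 iM2 pM1 pM2 ->
      is_biprod iC1 iC2 pC1 pC2 ->
      realizes e d x y -> realizes e d' x' y' ->
      realizes e (push e iA1 (pull e pC1 d) + push e iA2 (pull e pC2 d'))
        (iM1 ∘ x ∘ pA1 + iM2 ∘ x' ∘ pA2) (iC1 ∘ y ∘ pM1 + iC2 ∘ y' ∘ pM2);
  ET3 : forall (C A M C' A' M' : B) (d : Ex e C A) (d' : Ex e C' A')
      (x : Mor A M) (y : Mor M C) (x' : Mor A' M') (y' : Mor M' C')
      (a : Mor A A') (b : Mor M M'),
      realizes e d x y -> realizes e d' x' y' -> b ∘ x = x' ∘ a ->
      exists c : Mor C C', y' ∘ b = c ∘ y /\ push e a d = pull e c d';
  ET3op : forall (C A M C' A' M' : B) (d : Ex e C A) (d' : Ex e C' A')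
      (x : Mor A M) (y : Mor M C) (x' : Mor A' M') (y' : Mor M' C')
      (b : Mor M M') (c : Mor C C'),
      realizes e d x y -> realizes e d' x' y' -> y' ∘ b = c ∘ y ->
      exists a : Mor A A', b ∘ x = x' ∘ a /\ push e a d = pull e c d';
  ET4 : forall (A B0 D C F : B) (d : Ex e D A) (d' : Ex e F B0)
      (f : Mor A B0) (f' : Mor B0 D) (g : Mor B0 C) (g' : Mor C F),
      realizes e d f f' -> realizes e d' g g' ->
      exists (E : B) (d'' : Ex e E A) (h' : Mor C E) (k : Mor D E)
        (l : Mor E F),
      [/\ realizes e d'' (g ∘ f) h', realizes e (push e f' d') k l,
          pull e k d'' = d, push e f d'' = pull e l d'
        & h' ∘ g = k ∘ f' /\ l ∘ h' = g'];
  ET4op : forall (A B0 D C F : B) (d : Ex e A D) (d' : Ex e B0 F)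
      (f' : Mor D B0) (f : Mor B0 A) (g' : Mor F C) (g : Mor C B0),
      realizes e d f' f -> realizes e d' g' g ->
      exists (E : B) (d'' : Ex e A E) (h' : Mor E C) (k : Mor E D)
        (l : Mor F E),
      [/\ realizes e d'' h' (f ∘ g), realizes e (pull e f' d') l k,
          push e k d'' = d, pull e f d'' = push e l d'
        & g ∘ h' = f' ∘ k /\ h' ∘ l = g']
}.

Definition conflation (B : Cat) (e : ExtriData B) (A M C : B)
  (x : Mor A M) (y : Mor M C) : Prop :=
  exists d : Ex e C A, realizes e d x y.

Definition deflation (B : Cat) (e : ExtriData B) (M C : B) (y : Mor M C) : Prop :=
  exists (A : B) (x : Mor A M), conflation e x y.

Definition projective (B : Cat) (e : ExtriData B) (P : B) : Prop :=
  forall (A M C : B) (x : Mor A M) (y : Mor M C), conflation e x y ->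
  forall f : Mor P C, exists g : Mor P M, y ∘ g = f.

Definition injective (B : Cat) (e : ExtriData B) (I : B) : Prop :=
  forall (A M C : B) (x : Mor A M) (y : Mor M C), conflation e x y ->
  forall f : Mor A I, exists g : Mor M I, g ∘ x = f.

Definition enough_projectives (B : Cat) (e : ExtriData B) : Prop :=
  forall C : B, exists (A P : B) (x : Mor A P) (y : Mor P C),
    projective e P /\ conflation e x y.

Definition enough_injectives (B : Cat) (e : ExtriData B) : Prop :=
  forall A : B, exists (I C : B) (x : Mor A I) (y : Mor I C),
    injective e I /\ conflation e x y.

Definition subcategory (B : Cat) (U : B -> Prop) : Prop :=
  [/\ (forall (X Y : B) (f : Mor X Y), is_iso f -> U X -> U Y),
      (forall Z : B, idm Z = 0 -> U Z)
    & (forall (A1 A2 S : B) (i1 : Mor A1 S) (i2 : Mor A2 S) (p1 : Mor S A1)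
         (p2 : Mor S A2), is_biprod i1 i2 p1 p2 -> U A1 -> U A2 -> U S)].

Definition summand_closed (B : Cat) (U : B -> Prop) : Prop :=
  forall (A1 A2 S : B) (i1 : Mor A1 S) (i2 : Mor A2 S) (p1 : Mor S A1)
    (p2 : Mor S A2), is_biprod i1 i2 p1 p2 -> U S -> U A1.

Definition perp1 (B : Cat) (e : ExtriData B) (U : B -> Prop) (Y : B) : Prop :=
  forall X : B, U X -> forall d : Ex e X Y, d = 0.

Definition rigid (B : Cat) (e : ExtriData B) (U : B -> Prop) : Prop :=
  forall X Y : B, U X -> U Y -> forall d : Ex e X Y, d = 0.

Definition cotorsion_pair (B : Cat) (e : ExtriData B) (U V : B -> Prop) : Prop :=
  [/\ subcategory U /\ subcategory V, summand_closed U /\ summand_closed V,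
      (forall X Y : B, U X -> V Y -> forall d : Ex e X Y, d = 0),
      (forall X : B, exists (VX UX : B) (x : Mor VX UX) (y : Mor UX X),
          [/\ V VX, U UX & conflation e x y])
    & (forall X : B, exists (VX UX : B) (x : Mor X VX) (y : Mor VX UX),
          [/\ V VX, U UX & conflation e x y])].

Definition Omega (B : Cat) (e : ExtriData B) (U : B -> Prop) (X : B) : Prop :=
  exists (P C : B) (x : Mor X P) (y : Mor P C),
    [/\ projective e P, U C & conflation e x y].

Definition heartH (B : Cat) (e : ExtriData B) (U V : B -> Prop) (X : B) : Prop :=
  (exists (VX UX : B) (x : Mor VX UX) (y : Mor UX X),
      [/\ V VX, U UX /\ V UX & conflation e x y])
  /\ (exists (VX UX : B) (x : Mor X VX) (y : Mor VX UX),
      [/\ U VX /\ V VX, U UX & conflation e x y]).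

Definition factors_through (B : Cat) (W : B -> Prop) (X Y : B) (f : Mor X Y) : Prop :=
  exists (Z : B) (u : Mor X Z) (v : Mor Z Y), W Z /\ f = v ∘ u.

(* the image of g : A -> B0 (A, B0 in H) is an epimorphism in the ideal
   quotient H/(U ∩ V) *)
Definition heart_epi (B : Cat) (e : ExtriData B) (U V : B -> Prop)
  (A B0 : B) (g : Mor A B0) : Prop :=
  forall (Y : B) (h : Mor B0 Y), heartH e U V Y ->
    factors_through (fun Z => U Z /\ V Z) (h ∘ g) ->
    factors_through (fun Z => U Z /\ V Z) h.

(* Fix conflations B0 -i-> C1 -> C2 and A -> C1' -> C2' (extensions eta and
   eta') with C1, C1' in C ∩ C^perp and C2, C2' in C, and realize g_* eta' by
   B0 -k-> Y -> C2'. Then k g factors through C1', and Y lies in H because the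
   cone of k_* eta lies in C ∩ C^perp. As g is epi in the heart, k factors
   through an object of C ∩ C^perp, hence through i since E(C2, -) vanishes on
   it, and (ET3) makes eta a pullback of g_* eta'. Every d in E(C0, B0) with
   C0 in C is a pullback of eta, since i_* d lies in E(C0, C1) = 0; so g_* is
   onto E(C0, B0). Finally, for X -p-> P -> C0 with P projective and extension
   eps, writing h_* eps = g_* delta, (ET3)^op yields h' with h'_* eps = delta;
   then h - g h' kills eps, so it factors through p, and projectivity of P
   lifts that factor along g. *)
From Pilot Require Import Defs.
From HB Require Import structures.
From mathcomp Require Import all_boot all_algebra.
Set Implicit Arguments. Unset Strict Implicit. Unset Printing Implicit Defensive.
Import GRing.Theory.
Local Open Scope ring_scope.

Section Additive.
Variables (B : Cat) (HA : Defs.additive B).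

Lemma is_biprodC (A1 A2 S : B) (i1 : Mor A1 S) (i2 : Mor A2 S)
    (p1 : Mor S A1) (p2 : Mor S A2) :
  is_biprod i1 i2 p1 p2 -> is_biprod i2 i1 p2 p1.
Proof. by case=> H1 H2 H3 H4 H5; split=> //; rewrite addrC. Qed.

Lemma is_biprod_iso (A1 A2 S S' : B) (i1 : Mor A1 S) (i2 : Mor A2 S)
    (p1 : Mor S A1) (p2 : Mor S A2) (phi : Mor S S') (psi : Mor S' S) :
  psi ∘ phi = idm S -> phi ∘ psi = idm S' ->
  is_biprod i1 i2 p1 p2 -> is_biprod (phi ∘ i1) (phi ∘ i2) (p1 ∘ psi) (p2 ∘ psi).
Proof.
move=> Hpp Hpp' [H1 H2 H3 H4 H5].
have sandwich (X Y : B) (a : Mor S Y) (b : Mor X S) :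
    (a ∘ psi) ∘ (phi ∘ b) = a ∘ b.
  by rewrite !(comp_assoc HA) -(comp_assoc HA a) Hpp (comp_idr HA).
split; rewrite ?sandwich //.
rewrite !(comp_assoc HA) -(comp_addl HA) -!(comp_assoc HA phi) -(comp_addr HA).
by rewrite H5 (comp_idr HA).
Qed.

End Additive.

Section Extriangulated.
Variables (B : Cat) (e : ExtriData B) (HE : extriangulated e).
Let HA := ext_additive HE.

Lemma push0 (C A A' : B) (a : Mor A A') : push e a (0 : Ex e C A) = 0.
Proof. by apply/(addrI (push e a 0)); rewrite -push_addE // !addr0. Qed.

Lemma pull0 (C' C A : B) (c : Mor C' C) : pull e c (0 : Ex e C A) = 0.
Proof. by apply/(addrI (pull e c 0)); rewrite -pull_addE // !addr0. Qed.

Lemma pushB (C A A' : B) (a a' : Mor A A') (d : Ex e C A) :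
  push e (a - a') d = push e a d - push e a' d.
Proof. by apply: (addIr (push e a' d)); rewrite -push_addM // !subrK. Qed.

Lemma split_realization (A C : B) : exists (S : B) (i1 : Mor A S) (i2 : Mor C S)
    (p1 : Mor S A) (p2 : Mor S C),
  is_biprod i1 i2 p1 p2 /\ realizes e (0 : Ex e C A) i1 p2.
Proof.
have [S [i1 [i2 [p1 [p2 Hb]]]]] := biprod_exists HA A C.
by exists S, i1, i2, p1, p2; split=> //; apply: real_zero Hb.
Qed.

Section Conflation.
Variables (A M C : B) (d : Ex e C A) (x : Mor A M) (y : Mor M C).
Hypothesis Hd : realizes e d x y.

Lemma push_eq0_extend (T : B) (a : Mor A T) :
  push e a d = 0 -> exists t : Mor M T, t ∘ x = a.
Proof.
move=> Ha.
have [S [i1 [i2 [p1 [p2 [[H1 _ _ _ _] Hr]]]]]] := split_realization T C.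
have [b [Hbx _]] := real_morph HE Hd Hr (etrans Ha (esym (pull_id HE _))).
exists (p1 ∘ b).
by rewrite -comp_assoc // Hbx comp_assoc // H1 comp_idl.
Qed.

Lemma pull_eq0_lift (Z : B) (c : Mor Z C) :
  pull e c d = 0 -> exists s : Mor Z M, y ∘ s = c.
Proof.
move=> Hc.
have [S [i1 [i2 [p1 [p2 [[_ H2 _ _ _] Hr]]]]]] := split_realization A Z.
have [b [_ Hyb]] := real_morph HE Hr Hd (etrans (push0 _ (idm A)) (esym Hc)).
exists (b ∘ i2).
by rewrite comp_assoc // Hyb -comp_assoc // H2 comp_idr.
Qed.

Lemma push_inflation_realized : push e x d = 0.
Proof.
have [S [i1 [i2 [p1 [p2 [_ Hr]]]]]] := split_realization M C.
have [c [_ ->]] := ET3 HE (a := x) (b := i1) Hd Hr erefl.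
exact: pull0.
Qed.

End Conflation.

Section Exactness.
Variables (A M C : B) (d : Ex e C A) (x : Mor A M) (y : Mor M C).
Hypothesis Hd : realizes e d x y.

Lemma push_inflation_eq0 (Z : B) (d' : Ex e Z A) :
  push e x d' = 0 -> exists w : Mor Z C, d' = pull e w d.
Proof.
move=> Hx.
have [M' [x' [y' Hr]]] := real_exists HE d'.
have [t Ht] := push_eq0_extend Hr Hx.
have [w [_ Hw]] := ET3 HE (a := idm A) Hr Hd (etrans Ht (esym (comp_idr HA _))).
by exists w; rewrite -Hw push_id.
Qed.

Lemma push_deflation_eq0 (Z : B) (d' : Ex e Z M) :
  push e y d' = 0 -> exists d0 : Ex e Z A, d' = push e x d0.
Proof.
move=> Hy.
have [N [m [n Hr]]] := real_exists HE d'.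
have [E [d'' [h' [k [l [_ Hkl _ Hpp _]]]]]] := ET4 HE Hd Hr.
rewrite Hy in Hkl.
have [s Hs] := pull_eq0_lift Hkl (pull0 _ (idm _)).
exists (pull e s d'').
by rewrite push_pull // Hpp -pull_comp // Hs pull_id.
Qed.

Lemma pull_inflation_eq0 (Z : B) (d' : Ex e M Z) :
  pull e x d' = 0 -> exists d0 : Ex e C Z, d' = pull e y d0.
Proof.
move=> Hx.
have [N [m [n Hr]]] := real_exists HE d'.
have [E [d'' [h' [k [l [_ Hlk _ Hpp _]]]]]] := ET4op HE Hd Hr.
rewrite Hx in Hlk.
have [r Hr'] := push_eq0_extend Hlk (push0 _ (idm _)).
exists (push e r d'').
by rewrite -push_pull // Hpp -push_comp // Hr' push_id.
Qed.

End Exactness.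

Lemma split_conflation_biprod (A M C : B) (x : Mor A M) (y : Mor M C) :
  realizes e (0 : Ex e C A) x y ->
  exists (i1 : Mor C M) (i2 : Mor A M) (p1 : Mor M C) (p2 : Mor M A),
    is_biprod i1 i2 p1 p2.
Proof.
move=> Hr.
have [S [i1 [i2 [p1 [p2 [Hb Hr0]]]]]] := split_realization A C.
have [phi [[psi [Hpp Hpp']] _ _]] := real_unique HE Hr0 Hr.
exists (phi ∘ i2), (phi ∘ i1), (p2 ∘ psi), (p1 ∘ psi).
exact/(is_biprod_iso HA Hpp Hpp')/is_biprodC.
Qed.

Lemma lift_along_deflation (X P C0 A B0 : B) (eps : Ex e C0 X)
    (p : Mor X P) (q : Mor P C0) (g : Mor A B0) (h : Mor X B0)
    (eta : Ex e C0 A) :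
  projective e P -> realizes e eps p q -> deflation e g ->
  push e h eps = push e g eta -> exists f : Mor X A, g ∘ f = h.
Proof.
move=> HP Heps [K [x Hx]] Hh.
have [M' [x' [y' Heta]]] := real_exists HE eta.
have [b0 Hb0] := HP _ _ _ x' y' (ex_intro _ eta Heta) q.
have [h' [_ Hh']] := ET3op HE Heps Heta (etrans Hb0 (esym (comp_idl HA q))).
rewrite pull_id // in Hh'.
have Hz : push e (h - g ∘ h') eps = 0.
  by rewrite pushB push_comp // Hh' Hh subrr.
have [t0 Ht0] := push_eq0_extend Heps Hz.
have [t1 Ht1] := HP _ _ _ x g Hx t0.
exists (h' + t1 ∘ p).
by rewrite comp_addr // comp_assoc // Ht1 Ht0 addrC subrK.
Qed.

End Extriangulated.

Section Heart.
Variables (B : Cat) (e : ExtriData B) (HE : extriangulated e) (C : B -> Prop).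
Hypotheses (Hrig : rigid e C) (Hcot : cotorsion_pair e C (perp1 e C)).
Let HA := ext_additive HE.

Lemma rigid_perp1 (Z : B) : C Z -> perp1 e C Z.
Proof. by move=> HZ X HX; apply: Hrig. Qed.

(* N is a direct summand of its C-approximation, which splits. *)
Lemma left_perp1_mem (N : B) :
  (forall W : B, perp1 e C W -> forall d : Ex e N W, d = 0) -> C N.
Proof.
move=> HN.
have [_ [HsumC _] _ Happ _] := Hcot.
have [VN [UN [x [y [HV HU [d Hd]]]]]] := Happ N.
rewrite (HN _ HV d) in Hd.
have [i1 [i2 [p1 [p2 Hb]]]] := split_conflation_biprod HE Hd.
exact: HsumC Hb HU.
Qed.

Lemma core_approximation (Y : B) :
  exists (VY UY : B) (x : Mor VY UY) (y : Mor UY Y),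
    [/\ perp1 e C VY, C UY /\ perp1 e C UY & conflation e x y].
Proof.
have [_ _ _ Happ _] := Hcot.
have [VY [UY [x [y [HV HU Hxy]]]]] := Happ Y.
by exists VY, UY, x, y; split=> //; split=> //; apply: rigid_perp1.
Qed.

Section Cone.
Variables (B0 C1 C2 Y C2' N : B) (eta : Ex e C2 B0) (theta : Ex e C2' B0)
  (i : Mor B0 C1) (j : Mor C1 C2) (k : Mor B0 Y) (l : Mor Y C2')
  (m : Mor Y N) (n : Mor N C2).
Hypotheses (HC2 : C C2) (HC2' : C C2').
Hypotheses (Heta : realizes e eta i j) (Htheta : realizes e theta k l)
  (Hcone : realizes e (push e k eta) m n).

Lemma cone_factor : exists t : Mor C1 N, t ∘ i = m ∘ k.
Proof.
apply: (push_eq0_extend HE Heta).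
by rewrite push_comp // (push_inflation_realized HE Hcone).
Qed.

Lemma cone_perp1 : perp1 e C C1 -> perp1 e C N.
Proof.
move=> HC1 Z HZ d.
have [t Ht] := cone_factor.
have [d1 ->] := push_deflation_eq0 HE Hcone (Hrig HZ HC2 (push e n d)).
have [d2 ->] := push_deflation_eq0 HE Htheta (Hrig HZ HC2' (push e l d1)).
by rewrite -push_comp // -Ht push_comp // (HC1 _ HZ (push e i d2)) (push0 HE).
Qed.

Lemma cone_mem : C C1 -> C N.
Proof.
move=> HC1; apply: left_perp1_mem => W HW d.
have [t Ht] := cone_factor.
have Hk : pull e k (pull e m d) = 0.
  by rewrite -pull_comp // -Ht pull_comp // (HW _ HC1 (pull e t d)) (pull0 HE).
have [d0 Hd0] := pull_inflation_eq0 HE Htheta Hk.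
rewrite (HW _ HC2' d0) (pull0 HE) in Hd0.
have [d0' ->] := pull_inflation_eq0 HE Hcone Hd0.
by rewrite (HW _ HC2 d0') (pull0 HE).
Qed.

End Cone.

Lemma heartH_middle (B0 Y C2' : B) (theta : Ex e C2' B0)
    (k : Mor B0 Y) (l : Mor Y C2') :
  heartH e C (perp1 e C) B0 -> C C2' -> realizes e theta k l ->
  heartH e C (perp1 e C) Y.
Proof.
move=> [_ [C1 [C2 [i [j [[HC1 HC1p] HC2 [eta Heta]]]]]]] HC2' Htheta.
split; first exact: core_approximation.
have [N [m [n Hcone]]] := real_exists HE (push e k eta).
exists N, C2, m, n; split=> //; last by exists (push e k eta).
split; first exact: (cone_mem HC2 HC2' Heta Htheta Hcone HC1).
exact: (cone_perp1 HC2 HC2' Heta Htheta Hcone HC1p).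
Qed.

Lemma heart_epi_push_surj (A B0 : B) (g : Mor A B0) :
  heartH e C (perp1 e C) A -> heartH e C (perp1 e C) B0 ->
  heart_epi e C (perp1 e C) g ->
  forall (C0 : B) (d : Ex e C0 B0), C C0 -> exists eta : Ex e C0 A, d = push e g eta.
Proof.
move=> [_ [C1' [C2' [i' [j' [[HC1' _] HC2' [eta' Heta']]]]]]] HB0 Hepi C0 d HC0.
have [_ [C1 [C2 [i [j [[HC1 _] HC2 [eta Heta]]]]]]] := HB0.
have [Y [k [l Htheta]]] := real_exists HE (push e g eta').
have Hkg : factors_through (fun Z => C Z /\ perp1 e C Z) (k ∘ g).
  have [b [Hb _]] := real_morph HE Heta' Htheta (esym (pull_id HE _)).
  by exists C1', i', b; split; [split=> //; apply: rigid_perp1 | rewrite Hb].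
have [Z [u [v [[HZ _] Hk]]]] := Hepi Y k (heartH_middle HB0 HC2' Htheta) Hkg.
have [u' Hu'] := push_eq0_extend HE Heta (Hrig HC2 HZ (push e u eta)).
have Hvu' : (v ∘ u') ∘ i = k ∘ idm B0.
  by rewrite (comp_idr HA) -(comp_assoc HA) Hu' Hk.
have [c [_ Hc]] := ET3 HE Heta Htheta Hvu'.
rewrite push_id // in Hc.
have [w ->] := push_inflation_eq0 HE Heta (Hrig HC0 HC1 (push e i d)).
by exists (pull e (c ∘ w) eta'); rewrite Hc -pull_comp // push_pull.
Qed.

End Heart.

Theorem mainTheorem7 (B : Cat) (e : ExtriData B) (HB : extriangulated e)
  (Hproj : enough_projectives e) (Hinj : enough_injectives e)
  (C : B -> Prop) (HCsub : subcategory C) (Hrig : rigid e C)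
  (Hcot : cotorsion_pair e C (perp1 e C))
  (A B0 : B) (g : Mor A B0) (Hg : deflation e g)
  (HA : heartH e C (perp1 e C) A) (HB0 : heartH e C (perp1 e C) B0)
  (Hepi : heart_epi e C (perp1 e C) g) :
  forall X : B, Omega e C X ->
  forall h : Mor X B0, exists f : Mor X A, g ∘ f = h.
Proof.
move=> X [P [C0 [p [q [HP HC0 [eps Heps]]]]]] h.
have [eta Heta] := heart_epi_push_surj HB Hrig Hcot HA HB0 Hepi (push e h eps) HC0.
exact: (lift_along_deflation HB HP Heps Hg Heta).
Qed.
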